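(* Let $n\ge2$ and $\mu\in{]0,\infty[}$. The polynomial $$f=-\tfrac{1}{16}\big(z_0^2\overline{z_1}^2-\overline{z_0}^2z_1^2\big)^2\big(|z_0|^2|z_1|^2-3|z_1|^4\big)+|z_1|^{12}$$ (pointwise products) lies in $\mathcal{R}_{0,\mu}$, i.e. it is real-valued, in $\bigoplus_k\mathscr{P}^{k,k}(\mathbb{C}^{1+n})$ and satisfies $f(w)\ge0$ for all $w\in\mathbb{C}^{1+n}$ with $\mathcal{J}(w)=\mu$, but $f$ cannot be written as $\sum_{j=1}^\ell\overline{g_j}g_j+(\mathcal{J}-\mu)h$ with $\ell\in\mathbb{N}_0$, $g_j\in\bigoplus_k\mathscr{P}^{k,k}(\mathbb{C}^{1+n})$ and real-valued $h\in\bigoplus_k\mathscr{P}^{k,k}(\mathbb{C}^{1+n})$.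
   Context: $z_0,\dots,z_n$ are the complex coordinates on $\mathbb{C}^{1+n}$ and $\overline{z_j}$ their conjugates; $\mathscr{P}^{k,k}(\mathbb{C}^{1+n})$ is the complex span of monomials $z^K\overline{z}^L$ with $|K|=|L|=k$ ($K,L\in\mathbb{N}_0^{1+n}$); $\bigoplus_k\mathscr{P}^{k,k}(\mathbb{C}^{1+n})$ is the algebra of $\mathrm{U}(1)$-invariant polynomials, with pointwise product. $\mathcal{J}=\sum_{j=0}^n z_j\overline{z_j}$. $\mathcal{R}_{0,\mu}$ denotes the set of real-valued elements of $\bigoplus_k\mathscr{P}^{k,k}(\mathbb{C}^{1+n})$ that are nonnegative on the level set $\{w:\mathcal{J}(w)=\mu\}$ (the quadratic module of the classical reduction to $\mathbb{CP}^n$). The second assertion says $f\notin(\bigoplus_k\mathscr{P}^{k,k})^{++}_{\mathrm H}+(\langle\mathcal{J}-\mu\rangle)_{\mathrm H}$, where the ideal is generated with respect to the pointwise product. *)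

From HB Require Import structures.
From mathcomp Require Import all_boot all_order all_algebra.
From mathcomp Require Import complex.
From mathcomp Require Import reals.
From mathcomp Require Import mpoly.
Set Implicit Arguments. Unset Strict Implicit. Unset Printing Implicit Defensive.
Import Order.TTheory GRing.Theory Num.Theory.
Local Open Scope ring_scope.

(* Polynomials in z_0..z_n, zbar_0..zbar_n are formal polynomials in 2(1+n)
   variables: variable (lshift _ j) stands for z_j, variable (rshift _ j) for
   conj z_j. *)
Definition cpoly (R : realType) (n : nat) := {mpoly R[i][n.+1 + n.+1]}.

Definition zvar (R : realType) (n : nat) (j : 'I_n.+1) : cpoly R n :=
  'X_(lshift n.+1 j).
Definition zbvar (R : realType) (n : nat) (j : 'I_n.+1) : cpoly R n :=
  'X_(rshift n.+1 j).

Definition zpt (R : realType) (n : nat) (w : 'I_n.+1 -> R[i])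
  : 'I_(n.+1 + n.+1) -> R[i] :=
  fun k => match split k with inl j => w j | inr j => (w j)^* end.

Definition ev (R : realType) (n : nat) (p : cpoly R n) (w : 'I_n.+1 -> R[i]) : R[i] :=
  p.@[zpt w].

(* p lies in the direct sum of the P^{k,k}: every monomial z^K zbar^L
   occurring in p has |K| = |L|. *)
Definition inPkk (R : realType) (n : nat) (p : cpoly R n) : Prop :=
  forall m : 'X_{1.. n.+1 + n.+1}, m \in msupp p ->
    (\sum_(j < n.+1) m (lshift n.+1 j) = \sum_(j < n.+1) m (rshift n.+1 j))%N.

Definition realvalued (R : realType) (n : nat) (p : cpoly R n) : Prop :=
  forall w : 'I_n.+1 -> R[i], ev p w \is Num.real.

Definition Jpoly (R : realType) (n : nat) : cpoly R n :=
  \sum_(j < n.+1) zvar R j * zbvar R j.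

Definition fpoly (R : realType) (n : nat) : cpoly R n :=
  let z0 := zvar R (ord0 : 'I_n.+1) in
  let z1 := zvar R (inord 1 : 'I_n.+1) in
  let zb0 := zbvar R (ord0 : 'I_n.+1) in
  let zb1 := zbvar R (inord 1 : 'I_n.+1) in
  - (16%:R)^-1%:MP * (z0 ^+ 2 * zb1 ^+ 2 - zb0 ^+ 2 * z1 ^+ 2) ^+ 2
      * (z0 * zb0 * (z1 * zb1) - 3%:R%:MP * (z1 * zb1) ^+ 2)
  + (z1 * zb1) ^+ 6.

From HB Require Import structures.
From mathcomp Require Import all_boot all_order all_algebra.
From mathcomp Require Import complex reals mpoly.
From mathcomp Require Import zify ring lra.
Set Implicit Arguments. Unset Strict Implicit. Unset Printing Implicit Defensive.
Import Order.TTheory GRing.Theory Num.Theory.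
Local Open Scope ring_scope.

(* Suppose f = sum_j |g_j|^2 + (J - mu) h.  Rescaling w onto the sphere J = mu and
   clearing denominators with a power of J(w) gives mu^6 J^(2K-6) f = sum_j |G_j|^2
   wherever J > 0, with polynomials G_j.  Along w = (k (a + i b), k, 1, 0, ..., 0)
   one has J(w) = 1 + (a^2 + b^2 + 1) k^2 and f(w) = k^12 M(a, b), where
   M(x, y) = x^4 y^2 + x^2 y^4 - 3 x^2 y^2 + 1 is the Motzkin polynomial; comparing
   coefficients of k^12 writes M as a sum of squared moduli of polynomials in (a, b).
   That is impossible: since M = 1 on both axes, the representing polynomials are
   constant there, so on the diagonal they have no linear term; as they have degree
   at most 3 there, the coefficient -3 of x^4 in M(x, x) = 2 x^6 - 3 x^4 + 1 would be
   a sum of squared moduli.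
   Nonnegativity is elementary: with x = |z_0|^2, y = |z_1|^2 and
   q = |z_0^2 conj(z_1)^2 - conj(z_0)^2 z_1^2|^2 <= 4 (x y)^2,
   f = q / 16 (x y - 3 y^2) + y^6. *)

Section HermitianSquares.
Variable C : numClosedFieldType.
Implicit Types (p q : {poly C}).

Definition conjp p : {poly C} := map_poly Num.conj p.

Lemma coef_conjp p i : (conjp p)`_i = (p`_i)^*.
Proof. by rewrite coef_map_id0 // rmorph0. Qed.

Lemma horner_conjp_nat p (k : nat) : (conjp p).[k%:R] = (p.[k%:R])^*.
Proof. by rewrite -[in LHS](rmorph_nat Num.conj k) horner_map. Qed.

Lemma coef_mul_conjp_double p m :
  (forall j, (j <= m.*2)%N -> j != m -> p`_j * (p`_(m.*2 - j))^* = 0) ->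
  (p * conjp p)`_(m.*2) = p`_m * (p`_m)^*.
Proof.
move=> cross0; rewrite coefM.
have ltm : (m < (m.*2).+1)%N by rewrite ltnS -addnn leq_addr.
rewrite (bigD1 (Ordinal ltm)) //= big1 ?addr0; first by rewrite coef_conjp -addnn addnK.
move=> [j ltj] /= neqj; rewrite coef_conjp; apply: cross0; first by rewrite -ltnS.
by apply: contra neqj => /eqP eqjm; apply/eqP/val_inj.
Qed.

Lemma coef_mul_conjp_low p m : (forall k, (k < m)%N -> p`_k = 0) ->
  (p * conjp p)`_(m.*2) = p`_m * (p`_m)^*.
Proof.
move=> low; apply: coef_mul_conjp_double => j lej neqj.
have [ltjm | ltmj | /eqP] := ltngtP j m; last by rewrite (negbTE neqj).
  by rewrite low // mul0r.
by rewrite (low (m.*2 - j)%N) ?rmorph0 ?mulr0 // -addnn; lia.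
Qed.

Lemma coef_mul_conjp_top p m : (size p <= m.+1)%N ->
  (p * conjp p)`_(m.*2) = p`_m * (p`_m)^*.
Proof.
move=> /leq_sizeP top; apply: coef_mul_conjp_double => j lej neqj.
have [ltjm | ltmj | /eqP] := ltngtP j m; last by rewrite (negbTE neqj).
  by rewrite (top (m.*2 - j)%N) ?rmorph0 ?mulr0 // -addnn; lia.
by rewrite top ?mul0r.
Qed.

Lemma coef4_mul_conjp p : p`_1 = 0 -> p`_4 = 0 ->
  (p * conjp p)`_4 = p`_2 * (p`_2)^*.
Proof.
move=> p1 p4; apply: (@coef_mul_conjp_double p 2) => -[|[|[|[|[|j]]]]] //= _ _.
- by rewrite p4 rmorph0 mulr0.
- by rewrite p1 mul0r.
- by rewrite p1 rmorph0 mulr0.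
- by rewrite p4 mul0r.
Qed.

Lemma sum_mul_conj_eq0 (I : finType) (F : I -> C) :
  \sum_i F i * (F i)^* = 0 -> forall i, F i = 0.
Proof.
move=> /psumr_eq0P eq0 i; apply/eqP; rewrite -mul_conjC_eq0.
by apply/eqP/eq0=> // j _; apply: mul_conjC_ge0.
Qed.

Section HermitianSum.
Variables (I : finType) (P : I -> {poly C}) (Q : {poly C}).
Hypothesis herm_sumP : \sum_i P i * conjp (P i) = Q.

Lemma herm_sum_low m : (forall k, (k < m.*2)%N -> Q`_k = 0) ->
  (forall i k, (k < m)%N -> (P i)`_k = 0) /\
  \sum_i (P i)`_m * ((P i)`_m)^* = Q`_(m.*2).
Proof.
move=> Qlow.
have coefQ k : (forall i j, (j < k)%N -> (P i)`_j = 0) ->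
    Q`_(k.*2) = \sum_i (P i)`_k * ((P i)`_k)^*.
  move=> Plow; rewrite -herm_sumP coef_sum.
  by apply: eq_bigr => i _; apply: coef_mul_conjp_low => j; apply: Plow.
have Plow k i : (k < m)%N -> (P i)`_k = 0.
  elim/ltn_ind: k i => k IH i ltkm.
  apply: (sum_mul_conj_eq0 (F := fun i => (P i)`_k)).
  rewrite -coefQ => [|l j ltjk]; first by rewrite Qlow // ltn_double.
  by apply: IH => //; apply: ltn_trans ltkm.
by split=> [i k | ]; [apply: Plow | rewrite coefQ // => i k; apply: Plow].
Qed.

Lemma herm_sum_size s : (forall k, (s.*2 <= k)%N -> Q`_k = 0) ->
  forall i, (size (P i) <= s)%N.
Proof.
move=> Qtop.
suff sizeP d : (forall i, size (P i) <= s + d)%N -> forall i, (size (P i) <= s)%N.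
  apply: (sizeP (\sum_j size (P j))%N) => i.
  by rewrite (bigD1 i) //= addnCA leq_addr.
elim: d => [|d IH] sizePd; first by move=> i; rewrite -(addn0 s).
apply: IH => i; apply/leq_sizeP => j; rewrite leq_eqVlt => /orP[/eqP <- | ltj].
  apply: (sum_mul_conj_eq0 (F := fun i => (P i)`_(s + d))) => {i}.
  transitivity Q`_((s + d).*2); last by rewrite Qtop // leq_double leq_addr.
  rewrite -herm_sumP coef_sum; apply: eq_bigr => i _.
  by rewrite coef_mul_conjp_top // -addnS.
by move: (sizePd i); rewrite addnS => /leq_sizeP; apply.
Qed.

End HermitianSum.

Lemma herm_sum_constant_size (I : finType) (P : I -> {poly C}) c :
  \sum_i P i * conjp (P i) = c%:P -> forall i, (size (P i) <= 1)%N.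
Proof. by move=> /herm_sum_size; apply=> -[|k] //; rewrite coefC. Qed.

Lemma herm_sum_coef4_ge0 (I : finType) (P : I -> {poly C}) Q :
  \sum_i P i * conjp (P i) = Q -> (forall i, (P i)`_1 = 0) ->
  (forall k, (8 <= k)%N -> Q`_k = 0) -> 0 <= Q`_4.
Proof.
move=> PQ P1 Qtop; rewrite -PQ coef_sum; apply: sumr_ge0 => i _.
have /leq_sizeP top := @herm_sum_size _ _ _ PQ 4 Qtop i.
by rewrite coef4_mul_conjp ?mul_conjC_ge0 ?P1 ?top.
Qed.

Lemma poly_eq_on_nat p q : (forall k : nat, p.[k%:R] = q.[k%:R]) -> p = q.
Proof.
move=> eqpq; apply/eqP; rewrite -subr_eq0; apply/negPn/negP => neq0.
pose rs : seq C := [seq k%:R | k <- iota 0 (size (p - q))].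
have roots : all (root (p - q)) rs.
  by apply/allP => x /mapP [k _ ->]; rewrite rootE !hornerE eqpq subrr.
have uniq_rs : uniq rs.
  by rewrite map_inj_uniq ?iota_uniq // => a b /eqP; rewrite eqr_nat => /eqP.
by have := max_poly_roots neq0 roots uniq_rs; rewrite size_map size_iota ltnn.
Qed.

Lemma herm_sum_on_nat (I : finType) (P : I -> {poly C}) Q :
  (forall k : nat, \sum_i (P i).[k%:R] * ((P i).[k%:R])^* = Q.[k%:R]) ->
  \sum_i P i * conjp (P i) = Q.
Proof.
move=> eqPQ; apply: poly_eq_on_nat => k; rewrite -eqPQ horner_sum.
by apply: eq_bigr => i _; rewrite hornerM horner_conjp_nat.
Qed.

End HermitianSquares.

Section Motzkin.
Variable C : numClosedFieldType.

Definition eval2 (x y : C) : {rmorphism {poly {poly C}} -> C} :=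
  horner_eval x \o map_poly (horner_eval y).

Definition motzkin (x y : C) : C :=
  x ^+ 4 * y ^+ 2 + x ^+ 2 * y ^+ 4 - 3%:R * x ^+ 2 * y ^+ 2 + 1.

Lemma eval2_diag (T : {poly {poly C}}) x : eval2 x x T = (T.['X]).[x].
Proof. by rewrite -[in RHS]horner_evalE -horner_map /= !horner_evalE hornerX. Qed.

Lemma coef1_horner_X (T : {poly {poly C}}) : (T.['X])`_1 = (T`_0)`_1 + (T`_1)`_0.
Proof.
rewrite -[in LHS](poly_take_drop 2 T) hornerD hornerM hornerXn coefD coefMXn addr0.
by rewrite /take_poly horner_poly !big_ord_recl big_ord0 addr0 coefD mulr1 coefMX.
Qed.

Lemma motzkin_not_herm_sum (I : finType) (T : I -> {poly {poly C}}) (c : C) :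
  0 < c ->
  ~ (forall a b : nat, \sum_i eval2 a%:R b%:R (T i) * (eval2 a%:R b%:R (T i))^*
                       = c * motzkin a%:R b%:R).
Proof.
move=> c_gt0 herm.
have herm_on (L : I -> {poly C}) (a b : nat -> nat) (Q : {poly C}) :
    (forall k i, (L i).[k%:R] = eval2 (a k)%:R (b k)%:R (T i)) ->
    (forall k : nat, c * motzkin (a k)%:R (b k)%:R = Q.[k%:R]) ->
    \sum_i L i * conjp (L i) = Q.
  move=> evL evQ; apply: herm_sum_on_nat => k; rewrite -evQ -herm.
  by apply: eq_bigr => i _; rewrite evL.
have x_axis i : ((T i)`_1).[0] = 0.
  have := @herm_sum_constant_size _ _ (fun i => map_poly (horner_eval 0) (T i)) c.
  move=> /(_ _ i)/leq_sizeP/(_ 1%N isT); rewrite coef_map; apply.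
  apply: (herm_on _ id (fun=> 0%N)) => // k; rewrite hornerC /motzkin; ring.
have y_axis i : ((T i)`_0)`_1 = 0.
  have := @herm_sum_constant_size _ _ (fun i => (T i)`_0) c.
  move=> /(_ _ i)/leq_sizeP/(_ 1%N isT); apply.
  apply: (herm_on _ (fun=> 0%N) id) => [k j | k].
    by rewrite /= horner_evalE horner_coef0 coef_map.
  by rewrite hornerC /motzkin; ring.
pose Q : {poly C} := c *: (1 - 3%:R *: 'X^4 + 2%:R *: 'X^6).
have diag : \sum_i (T i).['X] * conjp (T i).['X] = Q.
  apply: (herm_on _ id id) => k; first by move=> i; rewrite eval2_diag.
  by rewrite /Q !(hornerZ, hornerD, hornerN, hornerXn) -[1 : {poly C}]polyC1 hornerC /motzkin; ring.
have coefQ k : Q`_k = c * ((k == 0%N)%:R - 3%:R * (k == 4%N)%:R + 2%:R * (k == 6%N)%:R).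
  by rewrite /Q coefZ !coefD coefN coef1 !coefZ !coefXn.
have Qtop k : (7 < k)%N -> Q`_k = 0.
  move=> lt7k; rewrite coefQ !gtn_eqF ?(leq_trans _ lt7k) //; ring.
have diag1 i : (T i).['X]`_1 = 0.
  by rewrite coef1_horner_X y_axis -horner_coef0 x_axis addr0.
have Q4 : Q`_4 = - (c *+ 3) by rewrite coefQ /=; ring.
by have := herm_sum_coef4_ge0 diag diag1 Qtop; rewrite Q4 oppr_ge0 pmulrn_lle0 // (lt_geF c_gt0).
Qed.

End Motzkin.

(* The form is affine in q, so it is bounded below by its value at an endpoint
   of [0, 4 (x y)^2]: y^6 at q = 0 and y^3 (x - 2 y)^2 (x + y) / 4 at the other. *)
Lemma motzkin_form_ge0 (R : realFieldType) (x y q : R) :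
  0 <= x -> 0 <= y -> 0 <= q -> q <= 4%:R * (x * y) ^+ 2 ->
  0 <= q / 16%:R * (x * y - 3%:R * y ^+ 2) + y ^+ 6.
Proof.
move=> x0 y0 q0 qle.
have [le3yx | ltx3y] := lerP (3%:R * y) x.
  by apply: addr_ge0; [apply: mulr_ge0; [apply: divr_ge0 | nra] | apply: exprn_ge0].
have endpoint : 0 <= y ^+ 3 * ((x - 2%:R * y) ^+ 2 * (x + y)).
  by apply: mulr_ge0; [apply: exprn_ge0 | apply: mulr_ge0; [apply: sqr_ge0 | lra]].
have slack : 0 <= (4%:R * (x * y) ^+ 2 - q) * (y * (3%:R * y - x)).
  by apply: mulr_ge0; [lra | apply: mulr_ge0; lra].
have -> : q / 16%:R * (x * y - 3%:R * y ^+ 2) + y ^+ 6 =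
  ((4%:R * (x * y) ^+ 2 - q) * (y * (3%:R * y - x))
   + 4%:R * (y ^+ 3 * ((x - 2%:R * y) ^+ 2 * (x + y)))) / 16%:R by field.
by apply: divr_ge0; lra.
Qed.

Section FormOnConjugates.
Variable R : realType.
Local Notation C := R[i].

Definition fform (z0 z1 c0 c1 : C) : C :=
  - (16%:R)^-1 * (z0 ^+ 2 * c1 ^+ 2 - c0 ^+ 2 * z1 ^+ 2) ^+ 2
      * (z0 * c0 * (z1 * c1) - 3%:R * (z1 * c1) ^+ 2)
  + (z1 * c1) ^+ 6.

Lemma ge0_complexP (z : C) : 0 <= z -> exists2 r : R, z = (r%:C)%C & 0 <= r.
Proof. by move=> /[dup] /ger0_real /complex_realP [r ->]; rewrite ler0c; exists r. Qed.

(* [z0^2 conj(z1)^2 - conj(z0)^2 z1^2] is purely imaginary, so its square is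
   minus its squared modulus. *)
Lemma fform_conjE (z0 z1 : C) :
  fform z0 z1 z0^* z1^* =
    `|z0 ^+ 2 * z1^* ^+ 2 - (z0 ^+ 2 * z1^* ^+ 2)^*| ^+ 2 / 16%:R
    * (`|z0| ^+ 2 * `|z1| ^+ 2 - 3%:R * (`|z1| ^+ 2) ^+ 2) + (`|z1| ^+ 2) ^+ 6.
Proof.
set a := z0 ^+ 2 * z1^* ^+ 2; have conj_a : z0^* ^+ 2 * z1 ^+ 2 = a^*.
  by rewrite /a rmorphM !rmorphXn /= conjCK.
by rewrite /fform conj_a -/a !normCK rmorphB /= conjCK; ring.
Qed.

Lemma fform_ge0 (z0 z1 : C) : 0 <= fform z0 z1 z0^* z1^*.
Proof.
rewrite fform_conjE; set a := z0 ^+ 2 * z1^* ^+ 2.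
have normA : `|a - a^*| ^+ 2 <= 4%:R * (`|z0| ^+ 2 * `|z1| ^+ 2) ^+ 2.
  have : `|a - a^*| <= 2%:R * (`|z0| ^+ 2 * `|z1| ^+ 2).
    rewrite (le_trans (ler_normB _ _)) // norm_conjC normrM !normrX norm_conjC.
    by rewrite mulr2n mulrDl mul1r.
  move/(lerXn2r 2); rewrite exprMn -natrX; apply; rewrite nnegrE //.
  by rewrite mulr_ge0 // mulr_ge0 // exprn_ge0.
move: normA.
have [q -> q0] := ge0_complexP (exprn_ge0 2 (normr_ge0 (a - a^*))).
have [x -> x0] := ge0_complexP (exprn_ge0 2 (normr_ge0 z0)).
have [y -> y0] := ge0_complexP (exprn_ge0 2 (normr_ge0 z1)).
have -> : (4%:R * (x%:C * y%:C) ^+ 2 = (4%:R * (x * y) ^+ 2)%:C)%C.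
  by rewrite !(rmorphM, rmorphXn, rmorph_nat).
rewrite lecR => qle.
have -> : (q%:C / 16%:R * (x%:C * y%:C - 3%:R * y%:C ^+ 2) + y%:C ^+ 6 =
          (q / 16%:R * (x * y - 3%:R * y ^+ 2) + y ^+ 6)%:C)%C.
  by rewrite !(rmorph_nat, fmorphV, rmorphXn, rmorphM, rmorphB, rmorphD).
by rewrite ler0c motzkin_form_ge0.
Qed.

End FormOnConjugates.

Section Evaluation.
Variables (R : realType) (n : nat).
Local Notation C := R[i].
Implicit Types (w : 'I_n.+1 -> C).

Lemma zpt_lshift w j : zpt w (lshift n.+1 j) = w j.
Proof. by rewrite /zpt (unsplitK (inl _ j)). Qed.

Lemma zpt_rshift w j : zpt w (rshift n.+1 j) = (w j)^*.
Proof. by rewrite /zpt (unsplitK (inr _ j)). Qed.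

Lemma ev_Jpoly w : ev (Jpoly R n) w = \sum_j w j * (w j)^*.
Proof.
rewrite /ev /Jpoly rmorph_sum; apply: eq_bigr => j _.
by rewrite rmorphM /= !mevalXU zpt_lshift zpt_rshift.
Qed.

Lemma ev_fpoly w :
  ev (fpoly R n) w = fform (w ord0) (w (inord 1)) (w ord0)^* (w (inord 1))^*.
Proof.
by rewrite /ev /fpoly /= !(mevalD, mevalN, mevalB, mevalM, rmorphXn, mevalC,
  mevalXU, zpt_lshift, zpt_rshift).
Qed.

Lemma ev_fpoly_ge0 w : 0 <= ev (fpoly R n) w.
Proof. by rewrite ev_fpoly fform_ge0. Qed.

End Evaluation.

Section Balanced.
Variables (R : realType) (n : nat).
Implicit Types (p q : cpoly R n) (m : 'X_{1.. n.+1 + n.+1}).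

Definition balanced m : Prop :=
  (\sum_(j < n.+1) m (lshift n.+1 j) = \sum_(j < n.+1) m (rshift n.+1 j))%N.

Lemma balanced0 : balanced 0%MM.
Proof. by rewrite /balanced !big1 // => j _; rewrite mnm0E. Qed.

Lemma balancedD m1 m2 : balanced m1 -> balanced m2 -> balanced (m1 + m2)%MM.
Proof.
rewrite /balanced => bal1 bal2.
under eq_bigr => j _ do rewrite mnmDE.
under [in RHS]eq_bigr => j _ do rewrite mnmDE.
by rewrite !big_split /= bal1 bal2.
Qed.

Lemma sum_nat_pred1 (I : finType) (j : I) : (\sum_i (j == i) = 1)%N.
Proof. by rewrite (bigD1 j) //= eqxx big1 // => i; rewrite eq_sym => /negbTE ->. Qed.

Lemma balanced_zzbar (j k : 'I_n.+1) : balanced (U_(lshift n.+1 j) + U_(rshift n.+1 k))%MM.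
Proof.
rewrite /balanced.
under eq_bigr => i _ do rewrite mnmDE !mnm1E !eq_shift addn0.
under [in RHS]eq_bigr => i _ do rewrite mnmDE !mnm1E !eq_shift.
by rewrite !sum_nat_pred1.
Qed.

Lemma inPkkC (c : R[i]) : inPkk (c%:MP : cpoly R n).
Proof.
by move=> m; rewrite msuppC; case: eqP => // _; rewrite inE => /eqP ->; apply: balanced0.
Qed.

Lemma inPkkD p q : inPkk p -> inPkk q -> inPkk (p + q).
Proof. by move=> Pp Pq m /msuppD_le; rewrite mem_cat => /orP[/Pp | /Pq]. Qed.

Lemma inPkkN p : inPkk p -> inPkk (- p).
Proof. by move=> Pp m; rewrite (perm_mem (msuppN p)); apply: Pp. Qed.

Lemma inPkkM p q : inPkk p -> inPkk q -> inPkk (p * q).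
Proof.
move=> Pp Pq m /msuppM_le /allpairsP [[m1 m2] /= [/Pp bal1 /Pq bal2 ->]].
exact: balancedD.
Qed.

Lemma inPkkX p k : inPkk p -> inPkk (p ^+ k).
Proof.
move=> Pp; elim: k => [|k IH]; last by rewrite exprS; apply: inPkkM.
by rewrite expr0 -[1]/(1%:MP); apply: inPkkC.
Qed.

Lemma inPkk_zzbar (j k : 'I_n.+1) : inPkk (zvar R j * zbvar R k).
Proof. by move=> m; rewrite -mpolyXD msuppX inE => /eqP ->; apply: balanced_zzbar. Qed.

Lemma inPkk_fpoly : inPkk (fpoly R n).
Proof.
have zzbarC (j k : 'I_n.+1) : inPkk (zbvar R k * zvar R j).
  by rewrite mulrC; apply: inPkk_zzbar.
rewrite /fpoly -!exprMn; apply: inPkkD; last exact/inPkkX/inPkk_zzbar.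
apply: inPkkM; first apply: inPkkM; first exact/inPkkN/inPkkC.
  by apply/inPkkX/inPkkD; [apply/inPkkX/inPkk_zzbar | apply/inPkkN/inPkkX].
apply: inPkkD; first by apply: inPkkM; apply: inPkk_zzbar.
by apply/inPkkN/inPkkM; [apply: inPkkC | apply/inPkkX/inPkk_zzbar].
Qed.

End Balanced.

Section Homogenization.
Variables (R : realType) (n : nat).
Local Notation C := R[i].
Implicit Types (p : cpoly R n) (w : 'I_n.+1 -> C).

Lemma conj_realC (t : R) : ((t%:C)%C)^* = (t%:C)%C.
Proof. by rewrite conj_Creal //; apply/complex_realP; exists t. Qed.

Lemma conj_scale (t : R) (x : C) : ((t%:C)%C * x)^* = (t%:C)%C * x^*.
Proof. by rewrite rmorphM /= conj_realC. Qed.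

Lemma sqr_sqrtC (x : R) : 0 <= x -> ((Num.sqrt x)%:C)%C ^+ 2 = (x%:C)%C.
Proof. by move=> x0; rewrite -rmorphXn sqr_sqrtr. Qed.

Lemma ev_Jpoly_scale (t : R) w :
  ev (Jpoly R n) (fun j => (t%:C)%C * w j) = (t%:C)%C ^+ 2 * ev (Jpoly R n) w.
Proof.
rewrite !ev_Jpoly mulr_sumr; apply: eq_bigr => j _.
by rewrite conj_scale mulrACA -expr2.
Qed.

Lemma ev_fpoly_scale (t : R) w :
  ev (fpoly R n) (fun j => (t%:C)%C * w j) = (t%:C)%C ^+ 12 * ev (fpoly R n) w.
Proof. by rewrite !ev_fpoly !conj_scale /fform; ring. Qed.

Lemma ev_scale (t : R) w p :
  ev p (fun j => (t%:C)%C * w j) =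
  \sum_(m <- msupp p) p@_m * ((t%:C)%C ^+ mdeg m * \prod_i zpt w i ^+ m i).
Proof.
rewrite /ev mevalE; apply: eq_bigr => m _; congr (_ * _).
have zpt_scale i : zpt (fun j => (t%:C)%C * w j) i = (t%:C)%C * zpt w i.
  by rewrite /zpt; case: (split i) => j //; rewrite conj_scale.
under eq_bigr => i _ do rewrite zpt_scale exprMn.
by rewrite big_split /= prodrXr mdegE.
Qed.

Lemma inPkk_mdeg p m : inPkk p -> m \in msupp p ->
  mdeg m = (\sum_(j < n.+1) m (lshift n.+1 j))%N.*2.
Proof. by move=> Pp mp; rewrite mdegE big_split_ord /= -(Pp m mp) -addnn. Qed.

(* For p in the sum of the P^{k,k}, [(mdeg m)./2] is the common degree of m in z
   and in zbar; the result is bihomogeneous of bidegree (K, K) and equals mu^K p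
   on J = mu. *)
Definition homogenize (mu : R) (K : nat) p : cpoly R n :=
  \sum_(m <- msupp p) ((p@_m * (mu%:C)%C ^+ (mdeg m)./2)%:MP
     * Jpoly R n ^+ (K - (mdeg m)./2) * 'X_[m]).

Lemma ev_homogenize mu K p w : ev (homogenize mu K p) w =
  \sum_(m <- msupp p) (p@_m * (mu%:C)%C ^+ (mdeg m)./2
     * ev (Jpoly R n) w ^+ (K - (mdeg m)./2) * \prod_i zpt w i ^+ m i).
Proof.
rewrite /ev /homogenize rmorph_sum; apply: eq_bigr => m _.
by rewrite !rmorphM /= !rmorphXn /= !mevalC mevalX.
Qed.

Lemma homogenize_scale (mu r : R) K p w :
  inPkk p -> (forall m, m \in msupp p -> (mdeg m <= K.*2)%N) ->
  0 < mu -> 0 < r -> ev (Jpoly R n) w = (r%:C)%C ->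
  (r%:C)%C ^+ K * ev p (fun j => (Num.sqrt (mu / r))%:C%C * w j) =
  ev (homogenize mu K p) w.
Proof.
move=> Pp degp mu0 r0 Jw; rewrite ev_scale ev_homogenize mulr_sumr.
apply: eq_big_seq => m mp; rewrite (inPkk_mdeg Pp mp) half_double Jw.
set e := (\sum_(j < n.+1) _)%N.
have leeK : (e <= K)%N by rewrite -leq_double -(inPkk_mdeg Pp mp) degp.
rewrite -mul2n exprM sqr_sqrtC ?divr_ge0 ?ltW // -{1}(subnK leeK) exprD rmorphM fmorphV expr_div_n.
have re0 : (r%:C)%C ^+ e != 0 by rewrite expf_neq0 // eq_complex /= negb_and gt_eqF.
move: ((r%:C)%C ^+ e) re0 ((r%:C)%C ^+ (K - e)) => X X0 Y.
by field.
Qed.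

End Homogenization.

Section TestFamily.
Variables (R : realType) (n : nat).
Hypothesis n_ge2 : (2 <= n)%N.
Local Notation C := R[i].
Local Notation P3 := {poly {poly {poly C}}}.

Definition eval3 (e x y : C) : {rmorphism P3 -> C} :=
  horner_eval e \o map_poly (eval2 x y).

Lemma eval3C e x y c : eval3 e x y c%:P%:P%:P = c.
Proof. by rewrite /= map_polyC !horner_evalE !hornerC /= map_polyC /= !horner_evalE !hornerC. Qed.

Lemma eval3X e x y : eval3 e x y 'X = e.
Proof. by rewrite /= map_polyX horner_evalE hornerX. Qed.

Lemma eval3XC e x y : eval3 e x y 'X%:P = x.
Proof. by rewrite /= map_polyC !horner_evalE hornerC /= map_polyX horner_evalE hornerX. Qed.

Lemma eval3XCC e x y : eval3 e x y 'X%:P%:P = y.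
Proof.
by rewrite /= map_polyC !horner_evalE hornerC /= map_polyC horner_evalE hornerC /=
  horner_evalE hornerX.
Qed.

Definition test_point (k a b : nat) (j : 'I_n.+1) : C :=
  if j == ord0 then k%:R * (a%:R + 'i * b%:R)
  else if j == inord 1 then k%:R else if j == inord 2 then 1 else 0.

(* [test_point k a b] as a polynomial in k (outer), a and b (inner);
   [conjugate] selects its complex conjugate. *)
Definition test_var (conjugate : bool) (j : 'I_n.+1) : P3 :=
  if j == ord0 then 'X * ('X%:P + (if conjugate then - 'i else 'i)%:P%:P%:P * 'X%:P%:P)
  else if j == inord 1 then 'X else if j == inord 2 then 1 else 0.

Definition test_poly (p : cpoly R n) : P3 :=
  mmap (fun c => c%:P%:P%:P)
    (fun i => match split i with inl j => test_var false j | inr j => test_var true j end) p.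

Lemma conj_test_point0 (k a b : nat) :
  (k%:R * (a%:R + 'i * b%:R))^* = k%:R * (a%:R - 'i * b%:R) :> C.
Proof. by rewrite rmorphM rmorphD rmorphM /= !conjC_nat conjCi mulNr. Qed.

Lemma eval3_test_poly p k a b : eval3 k%:R a%:R b%:R (test_poly p) = ev p (test_point k a b).
Proof.
rewrite /test_poly /mmap rmorph_sum /ev mevalE; apply: eq_bigr => m _.
rewrite rmorphM eval3C /mmap1 rmorph_prod; congr (_ * _); apply: eq_bigr => i _.
rewrite rmorphXn; congr (_ ^+ _).
rewrite /zpt /test_var /test_point; case: (split i) => j.
  case: ifP => _.
    rewrite rmorphM rmorphD rmorphM; congr (_ * (_ + _ * _)).
    - exact: eval3X.
    - exact: eval3XC.
    - exact: eval3C.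
    - exact: eval3XCC.
  case: ifP => _; first exact: eval3X.
  by case: ifP => _; [apply: rmorph1 | apply: rmorph0].
case: ifP => _.
  rewrite conj_test_point0 -mulNr rmorphM rmorphD rmorphM; congr (_ * (_ + _ * _)).
  - exact: eval3X.
  - exact: eval3XC.
  - exact: eval3C.
  - exact: eval3XCC.
case: ifP => _; first by rewrite eval3X conjC_nat.
by case: ifP => _; [rewrite conjC1; apply: rmorph1 | rewrite conjC0; apply: rmorph0].
Qed.

Lemma inord12_neq :
  [/\ (inord 1 == ord0 :> 'I_n.+1) = false, (inord 2 == ord0 :> 'I_n.+1) = false
    & (inord 2 == inord 1 :> 'I_n.+1) = false].
Proof.
have val1 : val (inord 1 : 'I_n.+1) = 1%N by apply: inordK; rewrite ltnS ltnW.
have val2 : val (inord 2 : 'I_n.+1) = 2%N by apply: inordK; rewrite ltnS.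
by split; rewrite -val_eqE /= ?val1 ?val2.
Qed.

Lemma ev_Jpoly_test_point k a b : ev (Jpoly R n) (test_point k a b) =
  ((((a ^ 2 + b ^ 2 + 1) * k ^ 2 + 1)%N%:R : R)%:C)%C.
Proof.
have [ne10 ne20 ne21] := inord12_neq.
rewrite ev_Jpoly (bigD1 ord0) //= (bigD1 (inord 1)) /= ?ne10 //.
rewrite (bigD1 (inord 2)) /= ?ne20 ?ne21 // big1 => [|j].
  rewrite /test_point eqxx ne10 ne20 ne21 !eqxx conj_test_point0 conjC1 conjC_nat.
  rewrite rmorph_nat !(natrD, natrM, natrX) addr0 mulr1.
  have -> : (k%:R * (a%:R + 'i * b%:R)) * (k%:R * (a%:R - 'i * b%:R)) =
            k%:R ^+ 2 * (a%:R ^+ 2 - 'i ^+ 2 * b%:R ^+ 2) :> C by ring.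
  by rewrite sqrCi; ring.
by case/andP => /andP [/negbTE j0 /negbTE j1] /negbTE j2; rewrite /test_point j0 j1 j2 mul0r.
Qed.

Lemma ev_fpoly_test_point k a b :
  ev (fpoly R n) (test_point k a b) = k%:R ^+ 12 * motzkin a%:R b%:R.
Proof.
have [ne10 _ _] := inord12_neq.
rewrite ev_fpoly /test_point eqxx ne10 eqxx conj_test_point0 conjC_nat /fform /motzkin.
set x : C := k%:R; set u : C := a%:R; set v : C := b%:R.
have -> : (x * (u + 'i * v)) ^+ 2 * x ^+ 2 - (x * (u - 'i * v)) ^+ 2 * x ^+ 2 =
          'i * (4%:R * x ^+ 4 * u * v) by ring.
have -> : x * (u + 'i * v) * (x * (u - 'i * v)) = x ^+ 2 * (u ^+ 2 - 'i ^+ 2 * v ^+ 2)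
  by ring.
by rewrite exprMn sqrCi; field.
Qed.

End TestFamily.

Lemma herm_sum_test_poly (R : realType) (n : nat) (I : finType) (G : I -> cpoly R n)
    (c : R[i]) (N : nat) :
  (forall k a b : nat,
     \sum_i ev (G i) (test_point R k a b) * (ev (G i) (test_point R k a b))^* =
     c * (((a ^ 2 + b ^ 2 + 1) * k ^ 2 + 1)%N%:R) ^+ N * (k%:R ^+ 12 * motzkin a%:R b%:R)) ->
  forall a b : nat,
    \sum_i eval2 a%:R b%:R (test_poly (G i))`_6 * (eval2 a%:R b%:R (test_poly (G i))`_6)^* =
    c * motzkin a%:R b%:R.
Proof.
move=> herm a b.
pose P i := map_poly (eval2 a%:R b%:R) (test_poly (G i)).
pose Q : {poly R[i]} :=
  (c * motzkin a%:R b%:R) *: ((1 + (a ^ 2 + b ^ 2 + 1)%N%:R *: 'X^2) ^+ N * 'X^12).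
have PQ : \sum_i P i * conjp (P i) = Q.
  apply: herm_sum_on_nat => k.
  have evP i : (P i).[k%:R] = ev (G i) (test_point R k a b) by rewrite -eval3_test_poly.
  under eq_bigr => i _ do rewrite evP.
  rewrite herm /Q hornerZ hornerM horner_exp hornerD hornerZ !hornerXn.
  rewrite -[1 : {poly _}]polyC1 hornerC (natrD _ _ 1) natrM natrX addrC.
  by move: (_ ^+ N) => B; ring.
have Qlow k : (k < 6.*2)%N -> Q`_k = 0 by move=> ltk; rewrite /Q coefZ coefMXn ltk mulr0.
have [_ coef6] := herm_sum_low PQ Qlow.
rewrite (_ : c * _ = Q`_(6.*2)); last first.
  rewrite /Q coefZ coefMXn ltnn subnn -horner_coef0 horner_exp hornerD hornerZ hornerXn.
  by rewrite -[1 : {poly _}]polyC1 hornerC expr0n /= mulr0 addr0 expr1n mulr1.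
by rewrite -coef6; apply: eq_bigr => i _; rewrite coef_map.
Qed.

Section NoCertificate.
Variables (R : realType) (n : nat) (mu : R) (l : nat) (g : 'I_l -> cpoly R n) (h : cpoly R n).
Local Notation C := R[i].
Hypotheses (mu_gt0 : 0 < mu) (Pg : forall j, inPkk (g j)).
Hypothesis certificate : forall w : 'I_n.+1 -> C,
  ev (fpoly R n) w =
    \sum_(j < l) (ev (g j) w)^* * ev (g j) w + (ev (Jpoly R n) w - (mu%:C)%C) * ev h w.

(* Rescaling w onto the sphere J = mu kills the term in h; multiplying by a power
   of J(w) = r clears the denominators of the rescaling. *)
Lemma herm_sum_homogenize K :
  (3 <= K)%N -> (forall j m, m \in msupp (g j) -> (mdeg m <= K.*2)%N) ->
  forall (w : 'I_n.+1 -> C) (r : R), 0 < r -> ev (Jpoly R n) w = (r%:C)%C ->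
  (mu%:C)%C ^+ 6 * (r%:C)%C ^+ (K.*2 - 6) * ev (fpoly R n) w =
  \sum_(j < l) ev (homogenize mu K (g j)) w * (ev (homogenize mu K (g j)) w)^*.
Proof.
move=> K_ge3 deg_g w r r_gt0 Jw.
have r0 : (r%:C)%C != 0 by rewrite eq_complex /= negb_and gt_eqF.
set t := Num.sqrt (mu / r); pose w' j := (t%:C)%C * w j.
have t2 : (t%:C)%C ^+ 2 = ((mu / r)%:C)%C by rewrite sqr_sqrtC ?divr_ge0 ?ltW.
have Jw' : ev (Jpoly R n) w' = (mu%:C)%C.
  by rewrite ev_Jpoly_scale Jw t2 -rmorphM mulfVK ?gt_eqF.
have := certificate w'; rewrite Jw' subrr mul0r addr0 ev_fpoly_scale => fw'.
under eq_bigr => j _ do rewrite -(homogenize_scale (@Pg j) (@deg_g j) mu_gt0 r_gt0 Jw) -/t -/w'.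
transitivity ((r%:C)%C ^+ K.*2 * \sum_(j < l) (ev (g j) w')^* * ev (g j) w'); last first.
  rewrite mulr_sumr; apply: eq_bigr => j _.
  by rewrite rmorphM rmorphXn /= conj_realC -addnn exprD; ring.
rewrite -fw' (_ : 12 = 2 * 6)%N // exprM t2.
have le6K : (6 <= K.*2)%N by rewrite -addnn (leq_add K_ge3 K_ge3).
rewrite -[in RHS](subnK le6K) exprD rmorphM fmorphV expr_div_n.
move: ((r%:C)%C ^+ (K.*2 - 6)) ((r%:C)%C ^+ 6) (expf_neq0 6 r0) => X Y Y0.
by field.
Qed.

Hypothesis n_ge2 : (2 <= n)%N.

Lemma no_herm_sum_certificate : False.
Proof.
pose K := (3 + \sum_j msize (g j))%N.
have deg_g j m : m \in msupp (g j) -> (mdeg m <= K.*2)%N.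
  have : (msize (g j) <= \sum_j msize (g j))%N by rewrite (bigD1 j) //= leq_addr.
  by move=> le_sum /msize_mdeg_lt; rewrite /K -addnn; lia.
apply: (@motzkin_not_herm_sum _ _ (fun j => (test_poly (homogenize mu K (g j)))`_6)
          ((mu%:C)%C ^+ 6)); first by rewrite exprn_gt0 // ltcR.
apply: (herm_sum_test_poly (N := K.*2 - 6)) => k a b.
have r_gt0 : (0 : R) < ((a ^ 2 + b ^ 2 + 1) * k ^ 2 + 1)%N%:R by rewrite ltr0n addn1.
rewrite -(ev_fpoly_test_point _ n_ge2) -(rmorph_nat (real_complex R)).
by rewrite (herm_sum_homogenize (leq_addr _ _) deg_g r_gt0) ?ev_Jpoly_test_point.
Qed.

End NoCertificate.

Theorem proposition4p6 (R : realType) (n : nat) (mu : R) :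
  (2 <= n)%N -> 0 < mu ->
  (* f lies in R_{0,mu} *)
  (inPkk (fpoly R n) /\ realvalued (fpoly R n) /\
   (forall w : 'I_n.+1 -> R[i], ev (Jpoly R n) w = (mu%:C)%C -> 0 <= ev (fpoly R n) w))
  /\
  (* f is not a sum of hermitian squares plus a multiple of J - mu *)
  ~ (exists (l : nat) (g : 'I_l -> cpoly R n) (h : cpoly R n),
       (forall j, inPkk (g j)) /\ inPkk h /\ realvalued h /\
       forall w : 'I_n.+1 -> R[i],
         ev (fpoly R n) w =
           \sum_(j < l) (ev (g j) w)^* * ev (g j) w
           + (ev (Jpoly R n) w - (mu%:C)%C) * ev h w).
Proof.
move=> n_ge2 mu_gt0; split.
  split; first exact: inPkk_fpoly.
  by split=> [w | w _]; [apply/ger0_real/ev_fpoly_ge0 | apply: ev_fpoly_ge0].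
case=> l [g [h [Pg [_ [_ certificate]]]]].
exact: (no_herm_sum_certificate mu_gt0 Pg certificate n_ge2).
Qed.
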